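(* Let $g\in C^1$ be a Riemannian metric on $\mathbb{R}^D$ written as $g_x(u,u)=u^{\top}H(x)u$, with $\|H(x)-H(y)\|_{\mathcal{B}}\le L_H\|x-y\|_2$ for all $x,y$. Let $N\ge1$, $\gamma^{\mathrm{p}}\in\mathcal{C}^N_{\mathrm{p}}$, and $K_3^2:=\frac1N\sum_{n=0}^{N-1}\|\beta^{\mathrm{p}}(t_n)\|_2^2$. Then $$\left|\mathcal{E}^g(\gamma^{\mathrm{pl}})-\mathcal{E}^g_{\mathrm{l},N}(\gamma^{\mathrm{p}})\right|\le\frac{L_HK_3^3}{2N^{1/2}}.$$
   Context: $t_n=n/N$, $h=1/N$; $\mathcal{C}^N_{\mathrm{p}}$ is the set of maps $\gamma^{\mathrm{p}}:\{t_0,\dots,t_N\}\to\mathbb{R}^D$; $\beta^{\mathrm{p}}(t_n)=(\gamma^{\mathrm{p}}(t_{n+1})-\gamma^{\mathrm{p}}(t_n))/h$; $\gamma^{\mathrm{pl}}(t_n+s)=(1-Ns)\gamma^{\mathrm{p}}(t_n)+Ns\gamma^{\mathrm{p}}(t_{n+1})$ for $0\le s\le h$; $\mathcal{E}^g(\gamma)=\int_0^1 g_{\gamma(t)}(\dot\gamma,\dot\gamma)dt$; $\mathcal{E}^g_{\mathrm{l},N}(\gamma^{\mathrm{p}})=\frac1N\sum_{n=0}^{N-1}g_{\gamma^{\mathrm{p}}(t_n)}(\beta^{\mathrm{p}}(t_n),\beta^{\mathrm{p}}(t_n))$. $\|\cdot\|_{\mathcal{B}}$ is the operator norm. *)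

From HB Require Import structures.
From mathcomp Require Import all_boot all_order all_algebra.
From mathcomp Require Import all_classical all_reals all_analysis.
Set Implicit Arguments. Unset Strict Implicit. Unset Printing Implicit Defensive.
Import Order.TTheory GRing.Theory Num.Theory.
Import numFieldNormedType.Exports.
Local Open Scope classical_set_scope.
Local Open Scope ring_scope.

Section Defs.
Variables (R : realType) (D : nat).

Definition norm2 (v : 'cV[R]_D) : R := Num.sqrt (\sum_(i < D) v i 0 ^+ 2).

Definition opnorm (A : 'M[R]_D) : R :=
  sup [set norm2 (A *m u) | u in [set u : 'cV[R]_D | norm2 u <= 1]].

Definition quadform (H : 'M[R]_D) (u : 'cV[R]_D) : R := (u^T *m H *m u) 0 0.

Definition metric (H : 'cV[R]_D -> 'M[R]_D) (x u : 'cV[R]_D) : R :=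
  quadform (H x) u.

Definition energy (H : 'cV[R]_D -> 'M[R]_D) (gam : R -> 'cV[R]_D) : R :=
  Rintegral (@lebesgue_measure R) `[0%R, 1%R]
    (fun t : R => metric H (gam t) (derive1 gam t)).

Definition tn (N n : nat) : R := n%:R / N%:R.

(* beta^p(t_n) = (gamma^p(t_{n+1}) - gamma^p(t_n)) / h, h = 1/N *)
Definition beta (N : nat) (gp : nat -> 'cV[R]_D) (n : nat) : 'cV[R]_D :=
  N%:R *: (gp n.+1 - gp n).

(* index n of the segment [t_n, t_{n+1}] containing t (clamped to N-1) *)
Definition seg (N : nat) (t : R) : nat := minn (Num.truncn (t * N%:R)) N.-1.

Definition gpl (N : nat) (gp : nat -> 'cV[R]_D) (t : R) : 'cV[R]_D :=
  let n := seg N t in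
  let s := t - tn N n in
  (1 - N%:R * s) *: gp n + (N%:R * s) *: gp n.+1.

Definition energy_l (H : 'cV[R]_D -> 'M[R]_D) (N : nat) (gp : nat -> 'cV[R]_D) : R :=
  N%:R^-1 * \sum_(0 <= n < N) metric H (gp n) (beta N gp n).

End Defs.

(* On the n-th segment the interpolant is affine with velocity beta_n, so its energy
   density there is beta_n^T H(gp_n + (t - t_n) beta_n) beta_n, which differs from the
   discrete density beta_n^T H(gp_n) beta_n by at most L_H |beta_n|^3 (t - t_n).
   Integrating over the segment gives an error of L_H |beta_n|^3 / (2 N^2); summing and
   using sum_n |beta_n|^3 <= (sum_n |beta_n|^2)^(3/2) = (N K_3^2)^(3/2) gives the bound. *)

From HB Require Import structures.
From mathcomp Require Import all_boot all_order all_algebra.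
From mathcomp Require Import all_classical all_reals all_analysis.
From mathcomp Require Import measurable_realfun.
From mathcomp Require Import ring lra.
Set Implicit Arguments.
Unset Strict Implicit.
Unset Printing Implicit Defensive.

Import Order.TTheory GRing.Theory Num.Theory.
Import numFieldNormedType.Exports.
Local Open Scope classical_set_scope.
Local Open Scope ring_scope.

Lemma cauchy_schwarz_sum (R : realFieldType) (I : finType) (a b : I -> R) :
  (\sum_i a i * b i) ^+ 2 <= (\sum_i a i ^+ 2) * (\sum_i b i ^+ 2).
Proof.
set A := \sum_i a i ^+ 2; set B := \sum_i b i ^+ 2; set S := \sum_i a i * b i.
have A0 : 0 <= A by apply: sumr_ge0 => i _; exact: sqr_ge0.
have [Az|Ap] := eqVneq A 0.
  have ai i : a i = 0.
    apply/eqP; rewrite -sqrf_eq0; apply/eqP.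
    exact: (psumr_eq0P (fun j _ => sqr_ge0 (a j)) Az).
  by rewrite /S big1 ?expr0n ?Az ?mul0r // => i _; rewrite ai mul0r.
have Apos : 0 < A by rewrite lt_def Ap A0.
(* the quadratic [t |-> \sum_i (a i * t + b i) ^+ 2] is nonnegative at its vertex *)
have : 0 <= \sum_i (a i * (- S / A) + b i) ^+ 2 by apply: sumr_ge0 => i _; exact: sqr_ge0.
have -> : \sum_i (a i * (- S / A) + b i) ^+ 2 = B - S ^+ 2 / A.
  rewrite -[B - _](_ : (- S / A) ^+ 2 * A + 2 * (- S / A) * S + B = _); last by field.
  rewrite /A /B /S !mulr_sumr -!big_split /=; apply: eq_bigr => i _; ring.
by rewrite subr_ge0 ler_pdivrMr // mulrC.
Qed.

Section Euclidean.
Context {R : realType} {D : nat}.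
Implicit Types (u v : 'cV[R]_D) (A B : 'M[R]_D).

Lemma norm2_ge0 u : 0 <= norm2 u.
Proof. exact: sqrtr_ge0. Qed.

Lemma norm2Z (c : R) u : norm2 (c *: u) = `|c| * norm2 u.
Proof.
rewrite /norm2 -sqrtr_sqr -sqrtrM ?sqr_ge0 //; congr Num.sqrt.
by rewrite mulr_sumr; apply: eq_bigr => i _; rewrite !mxE exprMn.
Qed.

Lemma norm_dot_le u v : `|(u^T *m v) 0 0| <= norm2 u * norm2 v.
Proof.
rewrite -sqrtr_sqr /norm2 -sqrtrM; last by apply: sumr_ge0 => i _; exact: sqr_ge0.
apply: ler_wsqrtr; rewrite mxE.
under eq_bigr do rewrite mxE.
exact: cauchy_schwarz_sum.
Qed.

Lemma norm2_mulmx_le_frobenius A u :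
  norm2 (A *m u) <= Num.sqrt (\sum_i \sum_j A i j ^+ 2) * norm2 u.
Proof.
rewrite /norm2 -sqrtrM; last by apply: sumr_ge0 => i _; apply: sumr_ge0 => j _; exact: sqr_ge0.
apply: ler_wsqrtr; rewrite mulr_suml; apply: ler_sum => i _; rewrite mxE.
exact: cauchy_schwarz_sum.
Qed.

Lemma norm2_mulmx_le_opnorm_ball A u : norm2 u <= 1 -> norm2 (A *m u) <= opnorm A.
Proof.
move=> u1; apply: sup_upper_bound; last by exists u.
split; first by exists (norm2 (A *m u)), u.
exists (Num.sqrt (\sum_i \sum_j A i j ^+ 2)) => _ [v v1 <-].
apply: le_trans (norm2_mulmx_le_frobenius A v) _.
by rewrite ler_piMr ?sqrtr_ge0.
Qed.

Lemma opnorm_ge0 A : 0 <= opnorm A.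
Proof.
have norm2_0 : norm2 (0 : 'cV[R]_D) = 0 by rewrite -(scale0r 0) norm2Z normr0 mul0r.
by have := @norm2_mulmx_le_opnorm_ball A 0; rewrite mulmx0 norm2_0 ler01; apply.
Qed.

Lemma norm2_mulmx_le A u : norm2 (A *m u) <= opnorm A * norm2 u.
Proof.
have [u0|u_neq0] := eqVneq (norm2 u) 0.
  by have := norm2_mulmx_le_frobenius A u; rewrite u0 !mulr0.
have u_gt0 : 0 < norm2 u by rewrite lt_def u_neq0 norm2_ge0.
have := @norm2_mulmx_le_opnorm_ball A ((norm2 u)^-1 *: u).
rewrite -scalemxAr !norm2Z ger0_norm ?invr_ge0 ?norm2_ge0 // mulVf // lexx.
by rewrite mulrC ler_pdivrMr // => /(_ isT).
Qed.

Lemma norm_quadform_le A u : `|quadform A u| <= opnorm A * norm2 u ^+ 2.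
Proof.
rewrite /quadform -mulmxA (le_trans (norm_dot_le _ _)) //.
by rewrite mulrC expr2 mulrA ler_wpM2r ?norm2_ge0 ?norm2_mulmx_le.
Qed.

Lemma quadformBl A B u : quadform (A - B) u = quadform A u - quadform B u.
Proof. by rewrite /quadform mulmxBr mulmxBl !mxE. Qed.

End Euclidean.

Lemma integrable_setU d (T : measurableType d) (R : realType)
    (mu : {measure set T -> \bar R}) (A B : set T) (f : T -> \bar R) :
  measurable A -> measurable B -> [disjoint A & B] ->
  mu.-integrable A f -> mu.-integrable B f -> mu.-integrable (A `|` B) f.
Proof.
move=> mA mB AB /integrableP[mfA iA] /integrableP[mfB iB].
have mf : measurable_fun (A `|` B) f by apply/measurable_funU.
apply/integrableP; split => //.
rewrite integral_setU //; first exact: lte_add_pinfty.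
exact: measurableT_comp.
Qed.

Section RealIntegrals.
Context {R : realType}.
Notation mu := (@lebesgue_measure R).
Implicit Types (a b : R) (f g : R -> R).

Lemma integrable_set1 b f : mu.-integrable [set b] (EFin \o f).
Proof.
apply/integrableP; split; first exact: measurable_fun_set1.
by rewrite integral_set1.
Qed.

Lemma continuous_integrable_itv a b g : continuous g ->
  mu.-integrable `[a, b] (EFin \o g).
Proof.
move=> cg; apply: continuous_compact_integrable; first exact: segment_compact.
exact: continuous_subspaceT.
Qed.

Lemma lipschitz_continuous f (k : R) :
  (forall s t, `|f s - f t| <= k * `|s - t|) -> continuous f.
Proof.
move=> f_lip s; apply/cvgrPdist_le => e e_gt0.
have k1_gt0 : 0 < `|k| + 1 by rewrite ltr_pwDr.
near=> t.
apply: le_trans (f_lip s t) _.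
apply: (@le_trans _ _ ((`|k| + 1) * `|s - t|)).
  by rewrite ler_wpM2r // (le_trans (ler_norm k)) // lerDl.
rewrite -ler_pdivlMl // ltW //; near: t.
apply: (@cvgr_dist_lt _ _ _ _ _ id s); [exact: cvg_id | by rewrite mulr_gt0 ?invr_gt0].
Unshelve. all: by end_near.
Qed.

Lemma Rintegral_itv_subr_lbound a b : a < b ->
  \int[mu]_(t in `[a, b]) (t - a) = (b - a) ^+ 2 / 2.
Proof.
move=> ab; pose F (t : R) := (t - a) ^+ 2 / 2.
have dF (x : R) : is_derive x 1 F (x - a).
  apply: is_derive_eq.
  rewrite !(scaler0, subr0, add0r) !scaler1 -mulr2n -mulr_natr.
  by rewrite /GRing.scale /=; field.
have cF : continuous F.
  by move=> x; apply: differentiable_continuous; apply/derivable1_diffP; case: (dF x).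
rewrite /Rintegral (@continuous_FTC2 _ _ F a b ab).
- by rewrite /F subrr expr0n /= mul0r subr0.
- by apply: continuous_subspaceT => x; apply: continuousB; [exact: cvg_id | exact: cvg_cst].
- split; first by move=> x _; case: (dF x).
  + exact: cvg_at_right_filter (cF a).
  + exact: cvg_at_left_filter (cF b).
- by move=> x _; rewrite derive1E; case: (dF x).
Qed.

Lemma norm_Rintegral_itv_sub_cst_le a b g (c K : R) : a < b -> continuous g ->
  (forall t, a <= t <= b -> `|g t - c| <= K * (t - a)) ->
  `|\int[mu]_(t in `[a, b]) g t - (b - a) * c| <= K * ((b - a) ^+ 2 / 2).
Proof.
move=> ab cg g_near_c.
have cc : continuous (fun _ : R => c) by move=> x; exact: cvg_cst.
have csub : continuous (fun t => t - a).
  by move=> x; apply: continuousB; [exact: cvg_id | exact: cvg_cst].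
have -> : (b - a) * c = \int[mu]_(t in `[a, b]) c.
  rewrite Rintegral_cst //.
  by have := lebesgue_measure_itv `[a, b]; rewrite /= lte_fin ab /= => ->; rewrite -EFinD mulrC.
rewrite -RintegralB //; try exact: continuous_integrable_itv.
apply: le_trans (le_normr_Rintegral _ _) _ => //.
  by apply: continuous_integrable_itv => x; apply: continuousB; [exact: cg | exact: cc].
apply: (@le_trans _ _ (\int[mu]_(t in `[a, b]) (K * (t - a)))); last first.
  by rewrite RintegralZl ?Rintegral_itv_subr_lbound //; exact: continuous_integrable_itv.
apply: le_Rintegral => //.
- apply: continuous_integrable_itv => x.
  exact: (continuous_comp (continuousB (cg x) (cc x)) (@norm_continuous _ _ _)).
- apply: continuous_integrable_itv => x.
  have cK : {for x, continuous (fun=> K)} by exact: cvg_cst.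
  exact: continuousM cK (csub x).
Qed.

Lemma integrable_itv_oc_eq a b f g : a < b -> continuous g ->
  (forall t, a < t < b -> g t = f t) ->
  mu.-integrable `]a, b] (EFin \o f) /\
  \int[mu]_(t in `]a, b]) f t = \int[mu]_(t in `[a, b]) g t.
Proof.
move=> ab cg gf_oo.
have gf : {in `]a, b[%classic, g =1 f}.
  by move=> x; rewrite inE /= in_itv /= => /gf_oo.
have E : `]a, b]%classic = `]a, b[%classic `|` [set b].
  by rewrite (@setUitv1 _ _ (BRight a) b true) // bnd_simp.
have igcc : mu.-integrable `[a, b] (EFin \o g) by exact: continuous_integrable_itv.
have igoc : mu.-integrable `]a, b] (EFin \o g).
  by apply: integrableS igcc => //; exact: subset_itv_oc_cc.
have igoo : mu.-integrable `]a, b[ (EFin \o g).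
  by apply: integrableS igcc => //; exact: subset_itv_oo_cc.
have ifoo : mu.-integrable `]a, b[ (EFin \o f).
  by move: igoo; apply: eq_integrable => // x /gf /= ->.
have dj : [disjoint `]a, b[ & [set b]].
  rewrite /disj_set; apply/eqP/seteqP; split => x //= [].
  by rewrite in_itv /= => /andP[_ xb] xe; rewrite xe ltxx in xb.
have ifoc : mu.-integrable `]a, b] (EFin \o f).
  by rewrite E; apply: integrable_setU => //; exact: integrable_set1.
split => //.
rewrite E Rintegral_setU -?E // Rintegral_set1 addr0.
by rewrite -(eq_Rintegral mu gf) Rintegral_itv_bndo_bndc ?Rintegral_itv_obnd_cbnd.
Qed.

End RealIntegrals.

Lemma Rintegral_piecewise (R : realType) (t : nat -> R) (g : nat -> R -> R)
    (f : R -> R) (k : nat) :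
  (forall n, t n < t n.+1) ->
  (forall n, (n < k)%N -> continuous (g n)) ->
  (forall n s, (n < k)%N -> t n < s < t n.+1 -> g n s = f s) ->
  (@lebesgue_measure R).-integrable `[t 0%N, t k] (EFin \o f) /\
  \int[lebesgue_measure]_(s in `[t 0%N, t k]) f s =
  \sum_(0 <= n < k) \int[lebesgue_measure]_(s in `[t n, t n.+1]) g n s.
Proof.
move=> t_incr; elim: k => [|k IH] cg gf.
  by rewrite big_nil set_itv1; split; [exact: integrable_set1 | exact: Rintegral_set1].
have [if0k int0k] := IH (fun n (nk : (n < k)%N) => cg n (ltnW nk))
  (fun n s (nk : (n < k)%N) => gf n s (ltnW nk)).
have [ifk int_k] := @integrable_itv_oc_eq _ _ _ f (g k) (t_incr k) (cg k (ltnSn k))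
  (fun s => gf k s (ltnSn k)).
have t0k : t 0%N <= t k.
  by apply: (proj1 (nondecreasing_seqP t)) => // n; exact: ltW.
have E : `[t 0%N, t k.+1]%classic = `[t 0%N, t k]%classic `|` `]t k, t k.+1]%classic.
  by rewrite (@itv_bndbnd_setU _ _ _ (BRight (t k))) // bnd_simp ltW.
have dj : [disjoint `[t 0%N, t k]%classic & `]t k, t k.+1]%classic].
  rewrite /disj_set; apply/eqP/seteqP; split => x //= [].
  rewrite !in_itv /= => /andP[_ xk] /andP[kx _].
  by have := lt_le_trans kx xk; rewrite ltxx.
have if0k1 : (@lebesgue_measure R).-integrable `[t 0%N, t k.+1] (EFin \o f).
  by rewrite E; exact: integrable_setU.
by rewrite E Rintegral_setU -?E // int0k int_k big_nat_recr.
Qed.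

Section PiecewiseLinear.
Context {R : realType} {D : nat} (N : nat) (gp : nat -> 'cV[R]_D).
Hypothesis N_gt0 : (0 < N)%N.

Local Notation t n := (tn R N n).

Lemma tn_ltS n : t n < t n.+1.
Proof. by rewrite /tn ltr_pM2r ?invr_gt0 ?ltr0n // ltr_nat. Qed.

Lemma tnSB n : t n.+1 - t n = N%:R^-1.
Proof. by rewrite /tn -mulrBl -natrB // subSnn mul1r. Qed.

Lemma seg_eq n s : (n < N)%N -> t n <= s < t n.+1 -> seg N s = n.
Proof.
move=> nN /andP[tn_le_s s_lt_tnS]; rewrite /seg.
have NR_gt0 : 0 < N%:R :> R by rewrite ltr0n.
have sN_ge0 : 0 <= s * N%:R.
  by apply: mulr_ge0 (le_trans _ tn_le_s) (ltW NR_gt0); rewrite /tn divr_ge0.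
have /eqP -> : Num.truncn (s * N%:R) == n.
  by rewrite truncn_eq // -!ler_pdivrMr // -!ltr_pdivlMr // tn_le_s s_lt_tnS.
by apply/minn_idPl; rewrite -ltnS prednK.
Qed.

Lemma gpl_eq n s : (n < N)%N -> t n <= s < t n.+1 ->
  gpl N gp s = gp n + (s - t n) *: beta N gp n.
Proof.
move=> nN ns; rewrite /gpl (seg_eq nN ns) /beta.
by apply/matrixP => i j; rewrite !mxE; ring.
Qed.

Lemma derive1_gpl n s : (n < N)%N -> t n < s < t n.+1 ->
  derive1 (gpl N gp) s = beta N gp n.
Proof.
move=> nN /andP[tn_lt_s s_lt_tnS].
set e := Num.min (s - t n) (t n.+1 - s).
have e_gt0 : 0 < e by rewrite lt_min !subr_gt0 tn_lt_s s_lt_tnS.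
rewrite /derive1; apply: cvg_lim => //; apply: cvg_near_cst.
near=> h.
have h_neq0 : h != 0 by near: h; exact: nbhs_dnbhs_neq.
have : `|h| < e by near: h; exact: dnbhs0_lt.
rewrite lt_min !ltr_norml => /andP[/andP[? ?] /andP[? ?]].
have hs_in : t n <= h + s < t n.+1 by apply/andP; split; lra.
have s_in : t n <= s < t n.+1 by rewrite ltW.
rewrite (gpl_eq nN hs_in) (gpl_eq nN s_in).
have -> : gp n + (h + s - t n) *: beta N gp n - (gp n + (s - t n) *: beta N gp n) = h *: beta N gp n.
  by apply/matrixP => i j; rewrite !mxE; ring.
by rewrite scalerA mulVf // scale1r.
Unshelve. all: by end_near.
Qed.

End PiecewiseLinear.

Section SegmentEnergy.
Context {R : realType} {D : nat} (H : 'cV[R]_D -> 'M[R]_D) (LH : R).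
Hypothesis H_lip : forall x y, opnorm (H x - H y) <= LH * norm2 (x - y).
Context (N : nat) (gp : nat -> 'cV[R]_D).
Hypothesis N_gt0 : (0 < N)%N.

Local Notation t n := (tn R N n).

(* The energy density of [gpl N gp] on the n-th segment, extended beyond it so as to be
   continuous on all of [R], which the density of [gpl N gp] is not. *)
Definition segment_energy n s :=
  metric H (gp n + (s - t n) *: beta N gp n) (beta N gp n).

(* [LH] itself may be negative when [D = 0]. *)
Lemma lipschitz_const_mul_norm2_ge0 (u : 'cV[R]_D) : 0 <= LH * norm2 u.
Proof. by have := H_lip u 0; rewrite subr0; exact: le_trans (opnorm_ge0 _). Qed.

Lemma quadform_lipschitz x y u :
  `|quadform (H x) u - quadform (H y) u| <= LH * norm2 (x - y) * norm2 u ^+ 2.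
Proof.
rewrite -quadformBl; apply: le_trans (norm_quadform_le _ _) _.
by rewrite ler_wpM2r ?exprn_ge0 ?norm2_ge0.
Qed.

Lemma segment_energy_lipschitz n r s :
  `|segment_energy n r - segment_energy n s| <=
  LH * norm2 (beta N gp n) ^+ 3 * `|r - s|.
Proof.
apply: le_trans (quadform_lipschitz _ _ _) _.
have -> : gp n + (r - t n) *: beta N gp n - (gp n + (s - t n) *: beta N gp n) =
          (r - s) *: beta N gp n.
  by apply/matrixP => i j; rewrite !mxE; ring.
by rewrite norm2Z; lra.
Qed.

Lemma continuous_segment_energy n : continuous (segment_energy n).
Proof. exact: lipschitz_continuous (segment_energy_lipschitz n). Qed.

Lemma segment_energy_gpl n s : (n < N)%N -> t n < s < t n.+1 ->
  segment_energy n s = metric H (gpl N gp s) (derive1 (gpl N gp) s).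
Proof.
move=> nN ns; rewrite (derive1_gpl gp N_gt0 nN ns) (gpl_eq gp N_gt0 nN) //.
by case/andP: ns => /ltW -> ->.
Qed.

Lemma energy_gpl_segments : energy H (gpl N gp) =
  \sum_(0 <= n < N) \int[lebesgue_measure]_(s in `[t n, t n.+1]) segment_energy n s.
Proof.
have t0 : t 0%N = 0 by rewrite /tn mul0r.
have tN : t N = 1 by rewrite /tn divff // pnatr_eq0 -lt0n.
have [_ <-] := Rintegral_piecewise (tn_ltS N_gt0)
  (fun n _ => @continuous_segment_energy n) segment_energy_gpl.
by rewrite t0 tN.
Qed.

Lemma segment_energy_error n :
  `|\int[lebesgue_measure]_(s in `[t n, t n.+1]) segment_energy n s -
    N%:R^-1 * metric H (gp n) (beta N gp n)|
  <= LH * norm2 (beta N gp n) ^+ 3 * (N%:R^-1 ^+ 2 / 2).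
Proof.
rewrite -(@tnSB R N n).
apply: norm_Rintegral_itv_sub_cst_le; [exact: tn_ltS | exact: continuous_segment_energy |].
move=> s /andP[tn_le_s _].
have -> : metric H (gp n) (beta N gp n) = segment_energy n (t n).
  by rewrite /segment_energy subrr scale0r addr0.
apply: le_trans (segment_energy_lipschitz n s (t n)) _.
by rewrite ger0_norm ?subr_ge0.
Qed.

End SegmentEnergy.

Lemma mulr_sum_cube_le (R : rcfType) (c : R) (m : nat -> R) (k : nat) :
  (forall n, 0 <= m n) -> (forall n, 0 <= c * m n) ->
  c * \sum_(0 <= n < k) m n ^+ 3 <= c * Num.sqrt (\sum_(0 <= n < k) m n ^+ 2) ^+ 3.
Proof.
move=> m_ge0 cm_ge0; set S := \sum_(0 <= n < k) m n ^+ 2.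
have S_ge0 : 0 <= S by apply: sumr_ge0 => n _; exact: sqr_ge0.
have [c_ge0 | c_lt0] := leP 0 c; last first.
  have m0 n : m n = 0.
    by apply/eqP; rewrite eq_le m_ge0 -(nmulr_rge0 _ c_lt0) cm_ge0.
  by rewrite /S !big1 ?sqrtr0 ?expr0n // => n _; rewrite m0 expr0n.
rewrite ler_wpM2l //.
have m_le n : (n < k)%N -> m n <= Num.sqrt S.
  move=> nk; rewrite -(ger0_norm (m_ge0 n)) -sqrtr_sqr; apply: ler_wsqrtr.
  rewrite /S (bigD1_seq n) /= ?mem_index_iota ?nk ?iota_uniq // lerDl.
  by apply: sumr_ge0 => j _; exact: sqr_ge0.
apply: (@le_trans _ _ (\sum_(0 <= n < k) Num.sqrt S * m n ^+ 2)).
  apply: ler_sum_nat => n /= nk.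
  by rewrite exprSr mulrC ler_wpM2r ?exprn_ge0 ?m_le.
by rewrite -mulr_sumr -/S exprSr sqr_sqrtr // mulrC.
Qed.

Unset Implicit Arguments.
Set Strict Implicit.

Theorem proposition8p2 (R : realType) (D : nat) (H : 'cV[R]_D -> 'M[R]_D) (LH : R)
  (Hsym : forall x, (H x)^T = H x)
  (Hpd : forall x u, u != 0 -> 0 < quadform (H x) u)
  (Hdiff : forall x v, derivable H x v)
  (HC1 : forall v, continuous (fun x => 'D_v H x))
  (HLip : forall x y, opnorm (H x - H y) <= LH * norm2 (x - y))
  (N : nat) (HN : (1 <= N)%N) (gp : nat -> 'cV[R]_D) :
  let K3 := Num.sqrt (N%:R^-1 * \sum_(0 <= n < N) norm2 (beta N gp n) ^+ 2) in
  `| energy H (gpl N gp) - energy_l H N gp |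
    <= LH * K3 ^+ 3 / (2 * Num.sqrt N%:R).
Proof.
cbv zeta; set S := \sum_(0 <= n < N) _.
rewrite (energy_gpl_segments HLip gp HN) /energy_l mulr_sumr -sumrB.
apply: le_trans (ler_norm_sum _ _ _) _.
apply: le_trans (ler_sum_nat (fun n _ => segment_energy_error HLip gp HN n)) _.
rewrite -mulr_suml -mulr_sumr.
have N_gt0 : 0 < N%:R :> R by rewrite ltr0n.
have -> : LH * Num.sqrt (N%:R^-1 * S) ^+ 3 / (2 * Num.sqrt N%:R) =
    LH * Num.sqrt S ^+ 3 * (N%:R^-1 ^+ 2 / 2).
  rewrite sqrtrM ?invr_ge0 ?ltW // sqrtrV ?ltW //.
  have sqrtN_gt0 : 0 < Num.sqrt N%:R :> R by rewrite sqrtr_gt0.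
  rewrite -[in RHS](sqr_sqrtr (ltW N_gt0)); field.
  by rewrite gt_eqF.
apply: ler_wpM2r; first by rewrite divr_ge0 ?exprn_ge0 ?invr_ge0 ?ltW.
apply: mulr_sum_cube_le => n; first exact: norm2_ge0.
exact: lipschitz_const_mul_norm2_ge0 HLip _.
Qed.
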